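(* Let $\mathbb Z^N\subset\mathbb R^N$ be the lattice generated by an orthonormal basis, let $F\subset\mathbb R^N$ be a subspace and $\phi:\mathbb R^N\to F$ the orthogonal projection. Let $F=V\oplus W$ be a direct sum decomposition into real subspaces such that $\phi(\mathbb Z^N)\cap V$ is dense in $V$, $\phi(\mathbb Z^N)\cap W$ is discrete, and $\phi(\mathbb Z^N)=(V\cap\phi(\mathbb Z^N))+(W\cap\phi(\mathbb Z^N))$. Then $(F\cap\mathbb Z^N)+(V\cap\phi(\mathbb Z^N))$ is a subgroup of finite index in $\phi(\mathbb Z^N)$, the lattice $F\cap\mathbb Z^N$ has rank $\dim F-\dim V$, and the real vector space spanned by $F\cap\mathbb Z^N$ is orthogonal to $V$. *)

From HB Require Import structures.
From mathcomp Require Import all_boot all_order all_algebra.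
From mathcomp Require Import reals.
Set Implicit Arguments. Unset Strict Implicit. Unset Printing Implicit Defensive.
Import Order.TTheory GRing.Theory Num.Theory.
Local Open Scope ring_scope.

Section Defs.
Variables (R : realType) (N : nat).
Local Notation vec := 'rV[R]_N.

(* standard inner product: the canonical basis is orthonormal *)
Definition dotv (x y : vec) : R := \sum_(i < N) x ord0 i * y ord0 i.
Definition sqnorm (x : vec) : R := dotv x x.

Definition int_vec (x : vec) : Prop := forall i, x ord0 i \is a Num.int.

Definition is_orth_proj (F : {vspace vec}) (phi : vec -> vec) : Prop :=
  forall v, phi v \in F /\ (forall f, f \in F -> dotv (v - phi v) f = 0).

Definition img_lattice (phi : vec -> vec) : vec -> Prop :=
  fun x => exists z, int_vec z /\ x = phi z.

Definition setI_vs (S : vec -> Prop) (V : {vspace vec}) : vec -> Prop :=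
  fun x => S x /\ x \in V.

Definition sumset (A B : vec -> Prop) : vec -> Prop :=
  fun x => exists a b, A a /\ B b /\ x = a + b.

Definition dense_in (S : vec -> Prop) (V : {vspace vec}) : Prop :=
  forall v, v \in V -> forall e : R, 0 < e -> exists x, S x /\ sqnorm (v - x) < e.

Definition discrete (S : vec -> Prop) : Prop :=
  forall x, S x -> exists2 e : R, 0 < e & forall y, S y -> y != x -> e <= sqnorm (y - x).

Definition is_subgroup_of (H G : vec -> Prop) : Prop :=
  (forall x, H x -> G x) /\ H 0 /\ (forall x y, H x -> H y -> H (x - y)).

Definition finite_index (H G : vec -> Prop) : Prop :=
  exists s : seq vec, forall x, G x -> exists r h, r \in s /\ H h /\ x = r + h.

Definition lattice_rank (L : vec -> Prop) (k : nat) : Prop :=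
  exists b : 'I_k -> vec,
    (forall i, L (b i)) /\
    (forall c : 'I_k -> int, \sum_(i < k) (c i)%:~R *: b i = 0 -> forall i, c i = 0) /\
    (forall x, L x -> exists c : 'I_k -> int, x = \sum_(i < k) (c i)%:~R *: b i).

Definition real_span (L : vec -> Prop) : vec -> Prop :=
  fun x => exists n (b : 'I_n -> vec) (c : 'I_n -> R),
    (forall i, L (b i)) /\ x = \sum_(i < n) c i *: b i.

End Defs.

(* Let P be the matrix of phi.  Splitting every phi(e_j) along V + W gives
   P = A + Q P with the rows of A in V and Q integral, so B := Q P has its rows
   in W.  Discreteness of phi(Z^N) /\ W makes the set of integral combinations
   of the rows of B discrete; by Dirichlet's simultaneous approximation B is
   then a rational combination of a row basis of itself, so the kernel of
   x |-> x B is spanned by the rows of an integral matrix U.  The integral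
   vectors orthogonal to the rows of U form a lattice of rank
   rank B = dim W = dim F - dim V which lies in F and contains c (F /\ Z^N)
   for a fixed integer c > 0.  Density of phi(Z^N) /\ V makes every integral
   z in F orthogonal to V, because <z, phi y> = <z, y> is an integer.  Finally
   c phi(y) = (l U) P + r Z splits c phi(Z^N) into V /\ phi(Z^N) plus
   F /\ Z^N, whence the finite index. *)

From HB Require Import structures.
From mathcomp Require Import all_boot all_order all_algebra.
From mathcomp Require Import reals.
From mathcomp Require Import ring lra zify.
From Stdlib Require Import Classical_Prop Wf_nat.
Import Order.TTheory GRing.Theory Num.Theory.
Local Open Scope ring_scope.
Set Implicit Arguments. Unset Strict Implicit. Unset Printing Implicit Defensive.

Local Notation intmx := (mxOver Num.int).

Section DotProduct.
Variables (R : realType) (n : nat).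
Implicit Types (x y z u : 'rV[R]_n) (a : R).

Lemma dotvE x y : dotv x y = (x *m y^T) 0 0.
Proof. by rewrite /dotv !mxE; apply: eq_bigr => i _; rewrite !mxE. Qed.

Lemma dotvC x y : dotv x y = dotv y x.
Proof. by apply: eq_bigr => i _; rewrite mulrC. Qed.

Lemma dotvDl x y z : dotv (x + y) z = dotv x z + dotv y z.
Proof. by rewrite !dotvE mulmxDl mxE. Qed.

Lemma dotvZl a x y : dotv (a *: x) y = a * dotv x y.
Proof. by rewrite !dotvE -scalemxAl mxE. Qed.

Lemma dotvBl x y z : dotv (x - y) z = dotv x z - dotv y z.
Proof. by rewrite -scaleN1r dotvDl dotvZl mulN1r. Qed.

Lemma dotv0l y : dotv 0 y = 0.
Proof. by rewrite dotvE mul0mx mxE. Qed.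

Lemma dotv_suml (I : Type) (r : seq I) (P : pred I) (G : I -> 'rV[R]_n) y :
  dotv (\sum_(i <- r | P i) G i) y = \sum_(i <- r | P i) dotv (G i) y.
Proof. by elim/big_rec2: _ => [|i a b _ <-]; rewrite ?dotv0l ?dotvDl. Qed.

Lemma dotvDr x y z : dotv z (x + y) = dotv z x + dotv z y.
Proof. by rewrite dotvC dotvDl !(dotvC z). Qed.

Lemma dotvBr x y z : dotv z (x - y) = dotv z x - dotv z y.
Proof. by rewrite dotvC dotvBl !(dotvC z). Qed.

Lemma dotvZr a x y : dotv y (a *: x) = a * dotv y x.
Proof. by rewrite dotvC dotvZl dotvC. Qed.

Lemma dotv_mulmx_eq0 p q (A : 'M[R]_(p, n)) (B : 'M[R]_(q, n)) s t :
  A *m B^T = 0 -> dotv (s *m A) (t *m B) = 0.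
Proof. by move=> AB; rewrite dotvE trmx_mul mulmxA -(mulmxA s) AB mulmx0 mul0mx mxE. Qed.

Lemma sqnorm_ge0 x : 0 <= sqnorm x.
Proof. by apply: sumr_ge0 => i _; rewrite -expr2 sqr_ge0. Qed.

Lemma sqnorm_eq0 x : sqnorm x = 0 -> x = 0.
Proof.
move=> /psumr_eq0P x0; apply/rowP => i; rewrite mxE.
have /eqP : x 0 i * x 0 i = 0 by apply: x0 => // j _; rewrite -expr2 sqr_ge0.
by rewrite mulf_eq0 orbb => /eqP.
Qed.

Lemma normr_dotv_le a z u :
  0 < a -> 2 * `|dotv z u| <= a * sqnorm z + a^-1 * sqnorm u.
Proof.
move=> a0; have := sqnorm_ge0 (a *: z - u); have := sqnorm_ge0 (a *: z + u).
rewrite /sqnorm dotvBl dotvDl !dotvBr !dotvDr !dotvZl !dotvZr (dotvC u z).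
rewrite -/(sqnorm z) -/(sqnorm u); set d := dotv z u; set b := a^-1 * sqnorm u.
have -> : sqnorm u = a * b by rewrite mulrA mulfV ?gt_eqF ?mul1r.
move=> ge1 ge2; have : 0 <= a * (a * sqnorm z + 2 * d + b) by lra.
have : 0 <= a * (a * sqnorm z - 2 * d + b) by lra.
by rewrite !pmulr_rge0 //; case: (ler0P d) => _; lra.
Qed.

Lemma dotv_small z (e : R) :
  0 < e -> exists2 d, 0 < d & forall u, sqnorm u < d -> `|dotv z u| < e.
Proof.
move=> e0; have S0 := sqnorm_ge0 z; pose a := e / (sqnorm z + 1).
have a0 : 0 < a by rewrite divr_gt0 // ltr_wpDl.
exists (a * e) => [|u ue]; first exact: mulr_gt0.
have aS : a * sqnorm z < e.
  by rewrite /a mulrAC ltr_pdivrMr ?ltr_wpDl //; lra.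
have au : a^-1 * sqnorm u < e by rewrite ltr_pdivrMl.
have := normr_dotv_le z u a0; lra.
Qed.

End DotProduct.

Section IntegerMatrices.
Variable R : realType.

Lemma int_vecP n (x : 'rV[R]_n) : reflect (int_vec x) (x \is a intmx).
Proof. by apply: (iffP mxOverP) => xZ i => [|j]; rewrite ?[i]ord1 ?xZ. Qed.

Lemma intmxB m n (A B : 'M[R]_(m, n)) :
  A \is a intmx -> B \is a intmx -> A - B \is a intmx.
Proof. by move=> /mxOverP AZ /mxOverP BZ; apply/mxOverP => i j; rewrite !mxE rpredB. Qed.

Lemma col_mx_int m1 m2 n (A : 'M[R]_(m1, n)) (B : 'M[R]_(m2, n)) :
  A \is a intmx -> B \is a intmx -> col_mx A B \is a intmx.
Proof.
move=> /mxOverP AZ /mxOverP BZ; apply/mxOverP => i j.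
by rewrite mxE; case: splitP => k _; rewrite ?AZ ?BZ.
Qed.

Lemma lsubmx_int m n1 n2 (A : 'M[R]_(m, n1 + n2)) : A \is a intmx -> lsubmx A \is a intmx.
Proof. by move=> /mxOverP AZ; apply/mxOverP => i j; rewrite mxE. Qed.

Lemma rsubmx_int m n1 n2 (A : 'M[R]_(m, n1 + n2)) : A \is a intmx -> rsubmx A \is a intmx.
Proof. by move=> /mxOverP AZ; apply/mxOverP => i j; rewrite mxE. Qed.

Lemma delta_mx_int m n i j : (delta_mx i j : 'M[R]_(m, n)) \is a intmx.
Proof. by apply/mxOverP => a b; rewrite mxE; case: (_ && _). Qed.

Lemma map_intr_int m n (A : 'M[int]_(m, n)) : (map_mx intr A : 'M[R]_(m, n)) \is a intmx.
Proof. by apply/mxOverP => i j; rewrite mxE intr_int. Qed.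

Lemma map_ratr_int m n (A : 'M[rat]_(m, n)) :
  A \is a intmx -> map_mx (@ratr R) A \is a intmx.
Proof.
move=> /mxOverP AZ; apply/mxOverP => i j.
by rewrite mxE; have /intrP[z ->] := AZ i j; rewrite ratr_int.
Qed.

Lemma intmx_ratr m n (A : 'M[R]_(m, n)) :
  A \is a intmx -> exists Aq : 'M[rat]_(m, n), A = map_mx ratr Aq.
Proof.
move=> /mxOverP AZ; exists (map_mx (fun x => (Num.floor x)%:~R) A).
by apply/matrixP => i j; rewrite !mxE ratr_int floorK.
Qed.

End IntegerMatrices.

Lemma rat_mx_denom m n (X : 'M[rat]_(m, n)) :
  exists2 c : nat, (0 < c)%N & c%:R *: X \is a intmx.
Proof.
exists (\prod_(ij : 'I_m * 'I_n) `|denq (X ij.1 ij.2)|)%N.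
  by rewrite prodn_gt0 // => ij; rewrite absz_gt0 denq_neq0.
apply/mxOverP => i j; rewrite mxE (bigD1 (i, j)) //= natrM mulrC mulrA.
by rewrite rpredM ?natr_int // natr_absz normr_denq -numqE intr_int.
Qed.

Section OrthogonalProjection.
Variables (R : realType) (N : nat) (F : {vspace 'rV[R]_N}).
Variable phi : 'rV[R]_N -> 'rV[R]_N.
Hypothesis phiF : is_orth_proj F phi.
Implicit Types x y z f : 'rV[R]_N.

Lemma orth_proj_eq x z :
  z \in F -> (forall f, f \in F -> dotv (x - z) f = 0) -> phi x = z.
Proof.
move=> zF xz; have [xF xphi] := phiF x.
have dF : phi x - z \in F by rewrite memvB.
have dE : phi x - z = (x - z) - (x - phi x) by rewrite [RHS]addrC opprB addrA subrK.
apply/eqP; rewrite -subr_eq0; apply/eqP/sqnorm_eq0.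
by rewrite /sqnorm {1}dE dotvBl xz // xphi // subrr.
Qed.

Definition phimx : 'M[R]_N := \matrix_i phi (delta_mx 0 i).

Lemma phimxE x : phi x = x *m phimx.
Proof.
apply: orth_proj_eq => [|f fF].
  rewrite mulmx_sum_row; apply: memv_suml => i _.
  by rewrite rowK memvZ //; case: (phiF (delta_mx 0 i)).
rewrite {1}[x]row_sum_delta mulmx_sum_row -sumrB dotv_suml big1 // => i _.
by rewrite rowK -scalerBr dotvZl; case: (phiF (delta_mx 0 i)) => _ ->; rewrite ?mulr0.
Qed.

Lemma phimx_mem x : x *m phimx \in F.
Proof. by rewrite -phimxE; case: (phiF x). Qed.

Lemma phimx_orth x f : f \in F -> dotv (x - x *m phimx) f = 0.
Proof. by rewrite -phimxE; case: (phiF x) => _; apply. Qed.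

Lemma phimx_id f : f \in F -> f *m phimx = f.
Proof. by move=> fF; rewrite -phimxE; apply: orth_proj_eq => // g _; rewrite subrr dotv0l. Qed.

Lemma dotv_phimx z y : z \in F -> dotv z (y *m phimx) = dotv z y.
Proof.
move=> zF; apply/eqP; rewrite -subr_eq0 -dotvBr dotvC -opprB -scaleN1r dotvZl.
by rewrite phimx_orth ?mulr0.
Qed.

End OrthogonalProjection.

Section Dirichlet.
Variable R : archiRealFieldType.
Implicit Types x y : R.

Definition frac x := x - (Num.floor x)%:~R.

Lemma frac_ge0 x : 0 <= frac x.
Proof. by rewrite subr_ge0 floor_le. Qed.

Lemma frac_lt1 x : frac x < 1.
Proof. by have := floorD1_gt x; rewrite intrD /frac; lra. Qed.

Lemma truncn_frac_lt (K : nat) x : (0 < K)%N -> (Num.truncn (K%:R * frac x) < K)%N.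
Proof.
move=> K0; rewrite truncn_lt_nat ?mulr_ge0 ?frac_ge0 //.
by rewrite -[X in _ < X]mulr1 ltr_pM2l ?ltr0n ?frac_lt1.
Qed.

Lemma truncn_frac_close (K : nat) x y : (0 < K)%N ->
  Num.truncn (K%:R * frac x) = Num.truncn (K%:R * frac y) -> `|frac x - frac y| < K%:R^-1.
Proof.
move=> K0 xy; have K0' : 0 < K%:R :> R by rewrite ltr0n.
have /andP[x1 x2] := truncn_itv (mulr_ge0 (ler0n _ K) (frac_ge0 x)).
have /andP[y1 y2] := truncn_itv (mulr_ge0 (ler0n _ K) (frac_ge0 y)).
rewrite xy -natr1 in x1 x2; rewrite -natr1 in y2.
rewrite -(ltr_pM2l K0') mulfV ?gt_eqF // -{1}(ger0_norm (ltW K0')) -normrM mulrBr.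
by case: (ler0P (K%:R * frac x - K%:R * frac y)) => _; lra.
Qed.

Lemma dirichlet_approx m n (C : 'M[R]_(m, n)) (K : nat) :
  exists2 d : nat, (0 < d)%N & exists A : 'M[int]_(m, n),
    forall i j, `|d%:R * C i j - (A i j)%:~R| < K.+1%:R^-1.
Proof.
pose cell x : 'I_K.+1 := inord (Num.truncn (K.+1%:R * frac x)).
have cellP x y : cell x = cell y -> `|frac x - frac y| < K.+1%:R^-1.
  by move=> /(congr1 val); rewrite /= !inordK ?truncn_frac_lt //; apply: truncn_frac_close.
pose g (a : 'I_(K.+1 ^ (m * n)).+1) :=
  [ffun ij : 'I_m * 'I_n => cell (a%:R * C ij.1 ij.2)].
have /injectivePn[a1 [a2 a12 ga12]] : ~~ injectiveb g.
  by apply/injectiveP => /leq_card; rewrite card_ffun card_prod !card_ord ltnn.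
wlog lt12 : a1 a2 a12 ga12 / (a1 < a2)%N.
  move=> wlog_lt; case: (ltngtP a1 a2) => [|a21|/val_inj a12']; first exact: wlog_lt.
    by apply: (wlog_lt a2 a1); rewrite // eq_sym.
  by rewrite a12' eqxx in a12.
exists (a2 - a1)%N; first by rewrite subn_gt0.
exists (\matrix_(i, j) (Num.floor (a2%:R * C i j) - Num.floor (a1%:R * C i j))).
move=> i j; move/ffunP/(_ (i, j)): ga12; rewrite !ffunE /= => /cellP.
rewrite mxE natrB ?(ltnW lt12) // intrB distrC /frac; apply: le_lt_trans.
by rewrite le_eqVlt; apply/orP; left; apply/eqP; congr `|_|; ring.
Qed.

End Dirichlet.

Section DiscreteKernel.
Variable R : realType.

Lemma rowsub1_int m m' (f : 'I_m' -> 'I_m) : (rowsub f 1%:M : 'M[R]_(m', m)) \is a intmx.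
Proof. by apply/mxOverP => i j; rewrite !mxE; case: eqP. Qed.

Lemma sqnorm_mulmx_le r n (t : 'rV[R]_r) (B : 'M[R]_(r, n)) (d : R) :
  0 <= d -> (forall i, `|t 0 i| <= d) ->
  sqnorm (t *m B) <= d ^+ 2 * \sum_(l < n) (\sum_(i < r) `|B i l|) ^+ 2.
Proof.
move=> d0 td; rewrite mulr_sumr; apply: ler_sum => l _; rewrite mxE -expr2 -exprMn.
rewrite -real_normK ?num_real // lerXn2r ?nnegrE ?mulr_ge0 ?sumr_ge0 //.
rewrite mulr_sumr (le_trans (ler_norm_sum _ _ _)) // ler_sum // => i _.
by rewrite normrM ler_wpM2r.
Qed.

Lemma discrete_rational m r n (C : 'M[R]_(m, r)) (B : 'M[R]_(r, n)) (e : R) :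
  0 < e -> row_free B ->
  (forall (u : 'rV[R]_m) (t : 'rV[R]_r), u \is a intmx -> t \is a intmx ->
     (u *m C - t) *m B != 0 -> e <= sqnorm ((u *m C - t) *m B)) ->
  exists2 d : nat, (0 < d)%N & exists A : 'M[int]_(m, r), d%:R *: C = map_mx intr A.
Proof.
move=> e_gt0 Bfree Bdisc; pose S := \sum_(l < n) (\sum_(i < r) `|B i l|) ^+ 2.
have S_ge0 : 0 <= S by rewrite sumr_ge0 // => l _; rewrite sqr_ge0.
pose K := Num.bound (S / e); pose eps := K.+1%:R^-1 : R.
have eps01 : 0 < eps <= 1 by rewrite invr_gt0 ltr0n invf_le1 ?ler1n.
have small : eps ^+ 2 * S < e.
  have : S / e < K.+1%:R.
    by apply: lt_le_trans (archi_boundP _) _; rewrite ?ler_nat ?divr_ge0 // ltW.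
  rewrite ltr_pdivrMr // -ltr_pdivrMl ?ltr0n // => SK.
  apply: le_lt_trans SK; rewrite expr2 -mulrA ler_piMl ?mulr_ge0 //; lra.
have [d d_gt0 [A dCA]] := dirichlet_approx C K; exists d => //; exists A.
(* The rows of (d C - A) B are integral combinations of norm < e, hence 0. *)
apply/eqP; rewrite -subr_eq0 -(mulmx_free_eq0 _ Bfree).
apply/eqP/row_matrixP => i; rewrite row0 row_mul; apply/eqP; apply: contraT => nz.
have rowE_i : row i (d%:R *: C - map_mx intr A) =
    (d%:R *: delta_mx 0 i) *m C - row i (map_mx intr A).
  by rewrite linearB /= linearZ /= rowE scalemxAl.
have uZ : (d%:R *: delta_mx 0 i : 'rV[R]_m) \is a intmx.
  by rewrite mxOverZ ?natr_int ?delta_mx_int.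
have tZ : (row i (map_mx intr A) : 'rV[R]_r) \is a intmx.
  by rewrite rowE mxOverM ?delta_mx_int ?map_intr_int.
move: nz; rewrite rowE_i => /(Bdisc _ _ uZ tZ); rewrite leNgt => /negbTE <-.
apply: le_lt_trans small; apply: sqnorm_mulmx_le => [|j]; first by case/andP: eps01 => /ltW.
by rewrite -rowE_i; move: (dCA i j); rewrite !mxE => /ltW.
Qed.

Lemma discrete_int_kernel m n (B : 'M[R]_(m, n)) (e : R) : 0 < e ->
  (forall u : 'rV[R]_m, u \is a intmx -> u *m B != 0 -> e <= sqnorm (u *m B)) ->
  exists U : 'M[R]_m, [/\ U \is a intmx, U *m B = 0 & (kermx B <= U)%MS].
Proof.
move=> e_gt0 Bdisc; pose f := maxrankfun B; pose Bs := rowsub f B.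
pose Es : 'M[R]_(\rank B, m) := rowsub f 1%:M.
have BsE : Bs = Es *m B := rowsubE f B.
pose C := B *m pinvmx Bs; have CBs : C *m Bs = B by rewrite mulmxKpV // eq_maxrowsub.
have [d d_gt0 [A dCA]] : exists2 d : nat, (0 < d)%N &
    exists A : 'M[int]_(m, \rank B), d%:R *: C = map_mx intr A.
  apply: discrete_rational e_gt0 (maxrowsub_free B) _ => u t uZ tZ.
  rewrite -/f -/Bs mulmxBl -mulmxA CBs BsE mulmxA -mulmxBl; apply: Bdisc.
  by rewrite intmxB ?mxOverM ?rowsub1_int.
pose U := d%:R%:M - map_mx intr A *m Es; exists U; split.
- by rewrite intmxB ?mxOver_scalar ?natr_int ?mxOverM ?map_intr_int ?rowsub1_int.
- by rewrite mulmxBl mul_scalar_mx -mulmxA -BsE -dCA -scalemxAl CBs subrr.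
apply/row_subP => i; set x := row i (kermx B).
have xB : x *m B = 0 by apply/sub_kermxP; rewrite row_sub.
have xA : x *m map_mx intr A = 0 by rewrite -dCA -scalemxAr mulmxA xB mul0mx scaler0.
have -> : x = (d%:R^-1 *: x) *m U.
  rewrite mulmxBr mul_mx_scalar mulmxA -scalemxAl xA scaler0 mul0mx subr0 scalerA.
  by rewrite mulfV ?scale1r // pnatr_eq0 -lt0n.
exact: submxMl.
Qed.

End DiscreteKernel.

Section IntegerLinearAlgebra.
Variable R : realType.

Lemma int_orthocomplement m n (U : 'M[R]_(m, n)) : U \is a intmx ->
  exists k (Z : 'M[R]_(k, n)),
    [/\ Z \is a intmx, row_free Z, U *m Z^T = 0 & (\rank U + k)%N = n].
Proof.
move=> /intmx_ratr[Uq ->]; pose Z0 := row_base (kermx Uq^T).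
have [c c0 cZ0] := rat_mx_denom Z0.
exists _, (map_mx ratr (c%:R *: Z0)); split.
- exact: map_ratr_int.
- by rewrite /row_free mxrank_map mxrank_scale_nz ?pnatr_eq0 -?lt0n //; apply: row_base_free.
- have : Z0 *m Uq^T = 0 by apply/sub_kermxP; rewrite eq_row_base.
  move/(congr1 trmx); rewrite trmx_mul trmxK trmx0 => UZ0.
  by rewrite map_trmx -map_mxM linearZ /= -scalemxAr UZ0 scaler0 map_mx0.
by rewrite mxrank_map mxrank_ker mxrank_tr subnKC // rank_leq_col.
Qed.

Lemma mxrank_col_orth m k n (U : 'M[R]_(m, n)) (Z : 'M[R]_(k, n)) :
  U *m Z^T = 0 -> \rank (col_mx U Z) = (\rank U + \rank Z)%N.
Proof.
move=> UZ; rewrite -addsmxE mxrank_disjoint_sum //; apply/eqP/rowV0P => v.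
rewrite sub_capmx => /andP[/submxP[a va] /submxP[b vb]]; apply: sqnorm_eq0.
by rewrite /sqnorm {1}va vb dotv_mulmx_eq0.
Qed.

Lemma int_left_inverse m n (M : 'M[R]_(m, n)) : M \is a intmx -> row_full M ->
  exists2 c : nat, (0 < c)%N & exists2 X : 'M[R]_(n, m), X \is a intmx & X *m M = c%:R%:M.
Proof.
move=> /intmx_ratr[Mq ->]; rewrite /row_full mxrank_map => Mq_full.
have := mulmxKpV (submx_full 1%:M Mq_full); rewrite mul1mx => XM.
have [c c0 cX] := rat_mx_denom (pinvmx Mq).
exists c => //; exists (map_mx ratr (c%:R *: pinvmx Mq)); first exact: map_ratr_int.
by rewrite -map_mxM -scalemxAl XM scalemx1 map_scalar_mx rmorph_nat.
Qed.

End IntegerLinearAlgebra.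

Lemma dimv_rows (K : fieldType) m n (A : 'M[K]_(m, n)) (W : {vspace 'rV[K]_n}) :
  (forall x, x *m A \in W) -> (forall w, w \in W -> (w <= A)%MS) -> \dim W = \rank A.
Proof.
move=> AW WA; pose X := [tuple row i (row_base A) | i < \rank A].
have XW : <<X>>%VS = W.
  apply/vspaceP => w; apply/idP/idP.
    move/coord_span ->; apply: memv_suml => i _; apply: memvZ.
    rewrite -tnth_nth tnth_mktuple; have /submxP[x ->] : (row i (row_base A) <= A)%MS.
      by rewrite (submx_trans (row_sub _ _)) ?eq_row_base.
    exact: AW.
  move/WA; rewrite -(eq_row_base A) => /submxP[x ->]; rewrite mulmx_sum_row.
  apply: memv_suml => i _; apply/memvZ/memv_span.
  by rewrite -(tnth_mktuple (fun i => row i (row_base A))) mem_tnth.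
have : free X.
  apply/freeP => k Xk i; have : (\row_j k j) *m row_base A = 0.
    rewrite mulmx_sum_row -[RHS]Xk; apply: eq_bigr => j _.
    by rewrite mxE -tnth_nth tnth_mktuple.
  by move/eqP; rewrite mulmx_free_eq0 ?row_base_free // => /eqP/rowP/(_ i); rewrite !mxE.
by rewrite /free XW size_tuple => /eqP.
Qed.

Section Subgroups.
Variables (R : realType) (n : nat) (H G : 'rV[R]_n -> Prop).
Hypothesis HG : is_subgroup_of H G.
Implicit Types x y : 'rV[R]_n.

Lemma subgroup0 : H 0.
Proof. by case: HG => _ []. Qed.

Lemma subgroupB x y : H x -> H y -> H (x - y).
Proof. by case: HG => _ [_]; apply. Qed.

Lemma subgroupN x : H x -> H (- x).
Proof. by rewrite -sub0r; apply/subgroupB/subgroup0. Qed.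

Lemma subgroupD x y : H x -> H y -> H (x + y).
Proof. by move=> Hx Hy; rewrite -[y]opprK; apply/subgroupB/subgroupN. Qed.

Lemma subgroupMn x m : H x -> H (m%:R *: x).
Proof.
move=> Hx; elim: m => [|m IH]; first by rewrite scale0r; apply: subgroup0.
by rewrite mulrS scalerDl scale1r; apply: subgroupD.
Qed.

Lemma subgroupMz x (z : int) : H x -> H (z%:~R *: x).
Proof.
move=> Hx; case: z => m; rewrite ?NegzE ?mulrNz ?scaleNr; last apply: subgroupN.
  all: exact: subgroupMn.
Qed.

End Subgroups.

Section SubgroupConstructions.
Variables (R : realType) (n : nat).
Implicit Types (A B G S : 'rV[R]_n -> Prop) (V : {vspace 'rV[R]_n}).

Lemma subgroup_setI_vs S T V : is_subgroup_of S T -> is_subgroup_of (setI_vs S V) S.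
Proof.
move=> ST; split=> [x []//|]; split; first by split; [apply: subgroup0 ST | apply: mem0v].
by move=> x y [Sx xV] [Sy yV]; split; [apply: (subgroupB ST) | apply: memvB].
Qed.

Lemma subgroup_sumset A B G : is_subgroup_of A G -> is_subgroup_of B G ->
  is_subgroup_of G (fun=> True) -> is_subgroup_of (sumset A B) G.
Proof.
move=> AG BG GG; split.
  by move=> _ [a [b [Aa [Bb ->]]]]; apply: (subgroupD GG); [apply: AG.1 | apply: BG.1].
split; first by exists 0, 0; rewrite addr0; do !split; [apply: subgroup0 AG | apply: subgroup0 BG].
move=> _ _ [a1 [b1 [Aa1 [Bb1 ->]]]] [a2 [b2 [Aa2 [Bb2 ->]]]].
exists (a1 - a2), (b1 - b2); rewrite opprD addrACA.
by do !split; [apply: (subgroupB AG) | apply: (subgroupB BG)].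
Qed.

End SubgroupConstructions.

Section IntegerSubgroups.
Variables (R : realType) (k : nat).
Implicit Types (G : 'rV[R]_k -> Prop) (x y : 'rV[R]_k).

Lemma subgroup_coord_generator G (j : 'I_k) (c : nat) :
  is_subgroup_of G (@int_vec R k) -> (0 < c)%N -> G (c%:R *: delta_mx 0 j) ->
  exists2 g, G g /\ g 0 j != 0 & forall x, G x -> exists q : int, (x - q%:~R *: g) 0 j = 0.
Proof.
move=> GZ c0 Gc; pose Q g := (0 < g)%N /\ exists2 x, G x & x 0 j = g%:R.
have Qc : exists g, Q g.
  by exists c; split => //; exists (c%:R *: delta_mx 0 j); rewrite // !mxE !eqxx mulr1.
have [g [[[g0 [gam Ggam gamj]] gmin] _]] :=
  dec_inh_nat_subset_has_unique_least_element Q (fun g => classic (Q g)) Qc.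
exists gam; first by rewrite gamj pnatr_eq0 -lt0n.
move=> x Gx; have /intrP[m xj] : x 0 j \is a Num.int by case: GZ => /(_ x Gx).
exists (m %/ g)%Z; set y := x - _.
have yj : y 0 j = (m %% g)%Z%:~R.
  by rewrite !mxE gamj xj {1}(divz_eq m g) intrD intrM addrAC subrr add0r.
have r_ge0 : (0 <= m %% g)%Z by rewrite modz_ge0 // eqz_nat -lt0n.
have r_lt : (m %% g < g)%Z by rewrite ltz_pmod // ltz_nat.
apply/eqP; rewrite yj intr_eq0; apply: contraT => r_neq0.
have /gmin/ssrnat.leP : Q `|(m %% g)%Z|%N.
  split; first by rewrite absz_gt0.
  exists y; first by apply/(subgroupB GZ)/(subgroupMz GZ).
  by rewrite yj natr_absz ger0_norm.
lia.
Qed.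

Lemma lattice_rank_extend G T (jo : 'I_k) (g : 'rV[R]_k) j :
  is_subgroup_of G T -> G g -> g 0 jo != 0 ->
  (forall x, G x -> exists q : int, (x - q%:~R *: g) 0 jo = 0) ->
  lattice_rank (fun x => G x /\ x 0 jo = 0) j -> lattice_rank G j.+1.
Proof.
move=> GT Gg gj g_gen [b [G'b [bfree bspan]]].
exists (fun i => oapp b g (unlift ord0 i)); split; last split.
- by move=> i; case: (unliftP ord0 i) => [i' _|_] /=; [case: (G'b i') | ].
- move=> cf; rewrite big_ord_recl /= unlift_none /=.
  under eq_bigr do rewrite liftK /=.
  move=> cf_eq0; have cf0 : cf ord0 = 0.
    move/rowP/(_ jo): (cf_eq0); rewrite !mxE summxE big1 => [|i _]; last first.
      by rewrite mxE; case: (G'b i) => _ ->; rewrite mulr0.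
    by move/eqP; rewrite addr0 mulf_eq0 (negPf gj) orbF intr_eq0 => /eqP.
  move: cf_eq0; rewrite cf0 scale0r add0r => /bfree cf_lift i.
  by case: (unliftP ord0 i) => [i' ->|->].
move=> x Gx; have [q xq] := g_gen x Gx.
have [cf xcf] := bspan _ (conj (subgroupB GT Gx (subgroupMz GT q Gg)) xq).
exists (fun i => oapp cf q (unlift ord0 i)); rewrite big_ord_recl /= unlift_none /=.
under eq_bigr do rewrite liftK /=.
by rewrite -xcf addrC subrK.
Qed.

Lemma lattice_rank_subgroup_int G (c : nat) j : (0 < c)%N ->
  is_subgroup_of G (@int_vec R k) -> (j <= k)%N ->
  (forall x, G x -> forall i : 'I_k, (j <= i)%N -> x 0 i = 0) ->
  (forall i : 'I_k, (i < j)%N -> G (c%:R *: delta_mx 0 i)) -> lattice_rank G j.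
Proof.
move=> c_gt0; elim: j G => [|j IH] G GZ jk Gsupp Gc.
  exists (fun=> 0); do ![split] => [[] //|cf _ [] //|x Gx]; exists (fun=> 0).
  by rewrite big_ord0; apply/rowP => i; rewrite mxE Gsupp.
pose jo := Ordinal jk.
have [g [Gg gj] g_gen] := subgroup_coord_generator GZ c_gt0 (Gc jo (ltnSn j)).
apply: (lattice_rank_extend GZ Gg gj g_gen); apply: IH => [|||i ij]; last 1 first.
- split; first by apply: Gc; apply: ltnW.
  by rewrite !mxE eqxx -val_eqE /= eq_sym (ltn_eqF ij) mulr0.
- split; first by move=> x [/(proj1 GZ)].
  split; first by split; [apply: subgroup0 GZ | rewrite mxE].
  by move=> x y [Gx xj] [Gy yj]; split; [apply: (subgroupB GZ) | rewrite !mxE xj yj subrr].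
- exact: ltnW.
move=> x [Gx xj] i ji; have [ji'|ij] := ltnP j i; first exact: Gsupp.
by rewrite (_ : i = jo) //; apply: val_inj => /=; apply/eqP; rewrite eqn_leq ij.
Qed.

End IntegerSubgroups.

Lemma lattice_rank_mulmx (R : realType) k n j (G : 'rV[R]_k -> Prop)
    (L : 'rV[R]_n -> Prop) (M : 'M[R]_(k, n)) :
  row_free M -> (forall x, L x <-> exists2 y, G y & x = y *m M) ->
  lattice_rank G j -> lattice_rank L j.
Proof.
move=> Mfree LG [b [Gb [bfree bspan]]]; exists (fun i => b i *m M); split; last split.
- by move=> i; apply/LG; exists (b i).
- move=> cf; under eq_bigr do rewrite scalemxAl.
  by move/eqP; rewrite -mulmx_suml mulmx_free_eq0 // => /eqP; apply: bfree.
move=> x /LG[y /bspan[cf ->] ->]; exists cf; rewrite mulmx_suml.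
by apply: eq_bigr => i _; rewrite scalemxAl.
Qed.

Lemma int_vec_divmod (R : realType) n (y : 'rV[R]_n) (c : nat) :
  (0 < c)%N -> y \is a intmx ->
  exists2 q : 'rV[R]_n, q \is a intmx & exists s : {ffun 'I_n -> 'I_c},
    y = c%:R *: q + \row_l (s l : nat)%:R.
Proof.
move=> c0 yZ; pose m l := Num.floor (y 0 l).
have ym l : y 0 l = (m l)%:~R by rewrite /m floorK // (mxOverP yZ).
have r_lt l : (`|(m l %% c)%Z| < c)%N.
  have := @modz_ge0 (m l) c; have := @ltz_pmod (m l) c; rewrite ltz_nat eqz_nat -lt0n c0; lia.
exists (\row_l ((m l %/ c)%Z)%:~R); first by apply/mxOverP => i l; rewrite mxE intr_int.
exists [ffun l => Ordinal (r_lt l)]; apply/rowP => l; rewrite !mxE ffunE /= ym.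
rewrite natr_absz ger0_norm ?modz_ge0 ?eqz_nat -?lt0n //.
by rewrite {1}(divz_eq (m l) c) intrD intrM mulrC.
Qed.

Section ImageLattice.
Variables (R : realType) (N : nat) (F V W : {vspace 'rV[R]_N}).
Variable phi : 'rV[R]_N -> 'rV[R]_N.
Hypothesis phiF : is_orth_proj F phi.
Local Notation P := (phimx phi).
Local Notation L := (img_lattice phi).
Local Notation FZ := (setI_vs (@int_vec R N) F).
Implicit Types x y z v w : 'rV[R]_N.

Lemma img_latticeP x : L x <-> exists2 y, y \is a intmx & x = y *m P.
Proof.
by split=> [[y [/int_vecP yZ ->]]|[y /int_vecP yZ ->]]; exists y; rewrite ?(phimxE phiF).
Qed.

Lemma img_lattice_subgroup : is_subgroup_of L (fun=> True).
Proof.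
split=> //; split; first by apply/img_latticeP; exists 0; rewrite ?mul0mx ?mxOver0.
move=> _ _ /img_latticeP[y yZ ->] /img_latticeP[y' y'Z ->].
by apply/img_latticeP; exists (y - y'); rewrite ?mulmxBl ?intmxB.
Qed.

Lemma FZ_subgroup : is_subgroup_of FZ L.
Proof.
split=> [z [/int_vecP zZ zF]|].
  by apply/img_latticeP; exists z; rewrite ?(phimx_id phiF).
split; first by split; [apply/int_vecP/mxOver0 | apply: mem0v].
move=> z z' [/int_vecP zZ zF] [/int_vecP z'Z z'F].
by split; [apply/int_vecP/intmxB | apply: memvB].
Qed.

Lemma sumset_FZ_subgroup : is_subgroup_of (sumset FZ (setI_vs L V)) L.
Proof.
apply: subgroup_sumset FZ_subgroup _ img_lattice_subgroup.
exact: subgroup_setI_vs img_lattice_subgroup.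
Qed.

Section Dense.
Hypothesis LV_dense : dense_in (setI_vs L V) V.

Lemma dotv_FZ_V z v : FZ z -> v \in V -> dotv z v = 0.
Proof.
(* <z, phi y> = <z, y> is an integer, but for phi y in V close enough to
   v / (2 <z, v>) it lies strictly within 1/2 of 1/2. *)
move=> [/int_vecP zZ zF] vV; apply/eqP/negPn/negP => zv_neq0.
pose v' := (2 * dotv z v)^-1 *: v.
have zv' : dotv z v' = 2^-1 by rewrite dotvZr invfM -mulrA mulVf ?mulr1.
have [d d0 zd] : exists2 d, 0 < d & forall u, sqnorm u < d -> `|dotv z u| < 2^-1.
  by apply: dotv_small; rewrite invr_gt0.
have v'V : v' \in V by rewrite memvZ.
have [_ [[/img_latticeP[y yZ ->] _] v'y]] := LV_dense v'V d0.
have := zd _ v'y; rewrite dotvBr zv' (dotv_phimx phiF) //.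
have /intrP[m ->] : dotv z y \is a Num.int.
  by rewrite rpred_sum // => i _; rewrite rpredM ?(mxOverP zZ) ?(mxOverP yZ).
by rewrite ltr_distlC subrr -[2^-1]mul1r -splitr ltr0z ltrz1; lia.
Qed.

Lemma real_span_FZ_orthogonal x v : real_span FZ x -> v \in V -> dotv x v = 0.
Proof.
case=> n [b [a [FZb ->]]] vV; rewrite dotv_suml big1 // => i _.
by rewrite dotvZl dotv_FZ_V ?mulr0.
Qed.

End Dense.

Lemma phimx_split : (forall x, L x -> sumset (setI_vs L V) (setI_vs L W) x) ->
  exists Am Qm : 'M[R]_N, [/\ Qm \is a intmx, forall x, x *m Am \in V,
    forall x, x *m (Qm *m P) \in W & P = Am + Qm *m P].
Proof.
move=> Ldec; have rows j : exists t : 'rV[R]_N * 'rV[R]_N,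
    [/\ t.1 \in V, t.2 \is a intmx, t.2 *m P \in W & row j P = t.1 + t.2 *m P].
  have /Ldec[a [_ [[_ aV] [[/img_latticeP[q qZ ->] qW] ->]]]] : L (row j P).
    by apply/img_latticeP; exists (delta_mx 0 j); rewrite -?rowE ?delta_mx_int.
  by exists (a, q).
have [t tP] := fin_all_exists rows.
exists (\matrix_j (t j).1), (\matrix_j (t j).2); split.
- by apply/mxOverP => i j; rewrite mxE; case: (tP i) => _ /mxOverP ->.
- move=> x; rewrite mulmx_sum_row; apply: memv_suml => j _.
  by rewrite rowK memvZ //; case: (tP j).
- move=> x; rewrite mulmx_sum_row; apply: memv_suml => j _.
  by rewrite row_mul rowK memvZ //; case: (tP j).
apply/row_matrixP => j; have [_ _ _ ->] := tP j.
by rewrite linearD /= row_mul !rowK.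
Qed.

Section Decomposition.
Hypothesis VW_F : (V + W)%VS = F.
Hypothesis VW0 : (V :&: W)%VS = 0%VS.
Variables Am Qm : 'M[R]_N.
Hypothesis Qm_int : Qm \is a intmx.
Hypothesis AmV : forall x, x *m Am \in V.
Hypothesis BmW : forall x, x *m (Qm *m P) \in W.
Hypothesis P_split : P = Am + Qm *m P.
Local Notation Bm := (Qm *m P).

Lemma memVW_eq0 v : v \in V -> v \in W -> v = 0.
Proof. by move=> vV vW; apply/eqP; rewrite -memv0 -VW0 memv_cap vV vW. Qed.

Lemma Bm_ker x : x *m P = 0 -> x *m Bm = 0.
Proof.
rewrite {1}P_split mulmxDr => /eqP; rewrite addr_eq0 => /eqP xAB.
by apply: memVW_eq0; rewrite // -[x *m Bm]opprK -xAB memvN.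
Qed.

Lemma Bm_id w : w \in W -> w *m Bm = w.
Proof.
move=> wW; have wF : w \in F by rewrite -VW_F (subvP (addvSr V W)).
have BA : w - w *m Bm = w *m Am.
  by rewrite -[X in X - _](phimx_id phiF wF) {1}P_split mulmxDr addrK.
apply/eqP; rewrite eq_sym -subr_eq0 BA; apply/eqP/memVW_eq0 => //.
by rewrite -BA memvB.
Qed.

Lemma dimv_W : \dim W = \rank Bm.
Proof. by apply: dimv_rows => // w /Bm_id <-; apply: submxMl. Qed.

Lemma Bm_discrete : discrete (setI_vs L W) ->
  exists2 e, 0 < e & forall u, u \is a intmx -> u *m Bm != 0 -> e <= sqnorm (u *m Bm).
Proof.
move=> LW_discrete; have LW0 : setI_vs L W 0.
  by split; [apply: subgroup0 img_lattice_subgroup | apply: mem0v].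
have [e e0 e_min] := LW_discrete 0 LW0; exists e => // u uZ uB0.
rewrite -[u *m Bm]subr0 e_min //; split => //.
by apply/img_latticeP; exists (u *m Qm); rewrite ?mulmxA ?mxOverM.
Qed.

(* U spans the kernel of x |-> x B, Z is an integral basis of the orthogonal
   complement of the rows of U, and X is c times a left inverse of col_mx U Z. *)
Section Lattice.
Variables (U : 'M[R]_N) (k : nat) (Z : 'M[R]_(k, N)) (c : nat) (X : 'M[R]_(N, N + k)).
Hypothesis U_int : U \is a intmx.
Hypothesis U_Bm : U *m Bm = 0.
Hypothesis ker_Bm_U : (kermx Bm <= U)%MS.
Hypothesis Z_int : Z \is a intmx.
Hypothesis Z_free : row_free Z.
Hypothesis U_Z : U *m Z^T = 0.
Hypothesis rank_U_k : (\rank U + k)%N = N.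
Hypothesis c_gt0 : (0 < c)%N.
Hypothesis X_int : X \is a intmx.
Hypothesis X_UZ : X *m col_mx U Z = c%:R%:M.

Lemma k_rank_Bm : k = \rank Bm.
Proof.
have : \rank U = \rank (kermx Bm).
  by apply/eqP; rewrite eqn_leq !mxrankS //; apply/sub_kermxP.
rewrite mxrank_ker => rank_U; apply/eqP; rewrite -(eqn_add2l (\rank U)) rank_U_k.
by rewrite rank_U subnK // rank_leq_row.
Qed.

Lemma Z_in_F t : t *m Z \in F.
Proof.
(* z - z P lies in ker B, hence in the row space of U, which is orthogonal to z;
   it is also orthogonal to z P, which lies in F. *)
set z := t *m Z; set u := z - z *m P.
have uP : u *m P = 0 by rewrite mulmxBl (phimx_id phiF (phimx_mem phiF z)) subrr.
have /submxP[a ua] : (u <= U)%MS by apply: submx_trans ker_Bm_U; apply/sub_kermxP/Bm_ker.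
suff /sqnorm_eq0/eqP : sqnorm u = 0 by rewrite subr_eq0 => /eqP ->; apply: phimx_mem.
have uz : dotv u z = 0 by rewrite ua dotv_mulmx_eq0.
have uzP : dotv u (z *m P) = 0 by apply: (phimx_orth phiF); apply: phimx_mem.
by rewrite /sqnorm {2}/u dotvBr uz uzP subrr.
Qed.

Lemma UP_in_V y : y *m U *m P \in V.
Proof. by rewrite P_split mulmxDr -(mulmxA y U Bm) U_Bm mulmx0 addr0. Qed.

Lemma scale_decomposition y :
  c%:R *: y = lsubmx (y *m X) *m U + rsubmx (y *m X) *m Z.
Proof. by rewrite -mul_row_col hsubmxK -mulmxA X_UZ mul_mx_scalar. Qed.

Hypothesis LV_dense : dense_in (setI_vs L V) V.

Lemma FZ_scale z : FZ z -> c%:R *: z = rsubmx (z *m X) *m Z.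
Proof.
move=> FZz; have [/int_vecP zZ zF] := FZz.
have := scale_decomposition z; set l := lsubmx _; set r := rsubmx _ => cz.
have vE : l *m U *m P = c%:R *: z - r *m Z.
  have : c%:R *: z *m P = (l *m U + r *m Z) *m P by rewrite cz.
  rewrite -scalemxAl (phimx_id phiF zF) mulmxDl (phimx_id phiF (Z_in_F r)).
  by move=> ->; rewrite addrK.
have vFZ : FZ (l *m U *m P).
  split; last by rewrite vE memvB ?memvZ ?Z_in_F.
  apply/int_vecP; rewrite vE; apply: intmxB; first by rewrite mxOverZ ?natr_int.
  by rewrite mxOverM ?rsubmx_int ?mxOverM.
have /sqnorm_eq0 := dotv_FZ_V LV_dense vFZ (UP_in_V l).
by rewrite vE => /eqP; rewrite subr_eq0 => /eqP.
Qed.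

Lemma finite_index_FZ : finite_index (sumset FZ (setI_vs L V)) L.
Proof.
exists [seq \row_l (s l : nat)%:R *m P | s : {ffun 'I_N -> 'I_c} <- enum {ffun 'I_N -> 'I_c}].
move=> _ /img_latticeP[y yZ ->]; have [q qZ [s ->]] := int_vec_divmod c_gt0 yZ.
exists (\row_l (s l : nat)%:R *m P), (c%:R *: q *m P); split; [|split].
- by apply/mapP; exists s; rewrite ?mem_enum.
- have := scale_decomposition q; set l := lsubmx _; set r := rsubmx _ => cq.
  exists (r *m Z), (l *m U *m P); split; [|split].
  + by split; [apply/int_vecP; rewrite mxOverM ?rsubmx_int ?mxOverM | apply: Z_in_F].
  + split; last exact: UP_in_V.
    by apply/img_latticeP; exists (l *m U); rewrite ?mxOverM ?lsubmx_int ?mxOverM.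
  + by rewrite cq mulmxDl (phimx_id phiF (Z_in_F r)) addrC.
- by rewrite mulmxDl addrC.
Qed.

Lemma lattice_rank_FZ : lattice_rank FZ k.
Proof.
have c_neq0 : c%:R != 0 :> R by rewrite pnatr_eq0 -lt0n.
(* F /\ Z^N is the image under t |-> t Z / c of a group between c Z^k and Z^k. *)
pose M := c%:R^-1 *: Z; pose G (t : 'rV[R]_k) := int_vec t /\ FZ (t *m M).
apply: (@lattice_rank_mulmx _ _ _ _ G _ M).
- by rewrite /row_free mxrank_scale_nz ?invr_eq0.
- move=> x; split=> [FZx|[t [_ FZtM] ->] //]; exists (rsubmx (x *m X)).
    split; last by rewrite /M -scalemxAr -FZ_scale // scalerA mulVf ?scale1r.
    by case: FZx => /int_vecP xZ _; apply/int_vecP; rewrite rsubmx_int ?mxOverM.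
  by rewrite /M -scalemxAr -FZ_scale // scalerA mulVf ?scale1r.
apply: (@lattice_rank_subgroup_int _ _ G c) => // [|x _ i|i _].
- split=> [t []//|]; split.
    by split; [apply/int_vecP/mxOver0 | rewrite mul0mx; apply: (subgroup0 FZ_subgroup)].
  move=> t t' [/int_vecP tZ FZt] [/int_vecP t'Z FZt']; split; first by apply/int_vecP/intmxB.
  by rewrite mulmxBl; apply: (subgroupB FZ_subgroup).
- by rewrite leqNgt ltn_ord.
split; first by apply/int_vecP; rewrite mxOverZ ?natr_int ?delta_mx_int.
rewrite /M -scalemxAr -scalemxAl scalerA mulVf // scale1r; split; last exact: Z_in_F.
by apply/int_vecP; rewrite mxOverM ?delta_mx_int.
Qed.

Lemma FZ_conclusions :
  [/\ is_subgroup_of (sumset FZ (setI_vs L V)) L, finite_index (sumset FZ (setI_vs L V)) L,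
      lattice_rank FZ (\dim F - \dim V)
    & forall x v, real_span FZ x -> v \in V -> dotv x v = 0].
Proof.
split; [exact: sumset_FZ_subgroup | exact: finite_index_FZ | | exact: real_span_FZ_orthogonal].
have -> : (\dim F - \dim V)%N = k.
  by rewrite -VW_F (dimv_disjoint_sum VW0) addKn dimv_W -k_rank_Bm.
exact: lattice_rank_FZ.
Qed.

End Lattice.

End Decomposition.
End ImageLattice.

Theorem lemmaI2p9 (R : realType) (N : nat) (F V W : {vspace 'rV[R]_N})
  (phi : 'rV[R]_N -> 'rV[R]_N) :
  is_orth_proj F phi ->
  (V + W)%VS = F -> (V :&: W)%VS = 0%VS ->
  dense_in (setI_vs (img_lattice phi) V) V ->
  discrete (setI_vs (img_lattice phi) W) ->
  (forall x, img_lattice phi x ->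
     sumset (setI_vs (img_lattice phi) V) (setI_vs (img_lattice phi) W) x) ->
  let FZ := setI_vs (@int_vec R N) F in
  let H := sumset FZ (setI_vs (img_lattice phi) V) in
  [/\ is_subgroup_of H (img_lattice phi),
      finite_index H (img_lattice phi),
      lattice_rank FZ (\dim F - \dim V)%N
    & forall x v, real_span FZ x -> v \in V -> dotv x v = 0].
Proof.
move=> phiF VW_F VW0 LV_dense LW_discrete L_split FZ H.
have [Am [Qm [Qm_int AmV BmW P_split]]] := phimx_split phiF L_split.
have [e e_gt0 Bm_disc] := Bm_discrete phiF Qm_int BmW LW_discrete.
have [U [U_int U_Bm ker_Bm_U]] := discrete_int_kernel e_gt0 Bm_disc.
have [k [Z [Z_int Z_free U_Z rank_U_k]]] := int_orthocomplement U_int.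
have UZ_full : row_full (col_mx U Z).
  by rewrite /row_full mxrank_col_orth // (eqP Z_free) rank_U_k.
have [c c_gt0 [X X_int X_UZ]] := int_left_inverse (col_mx_int U_int Z_int) UZ_full.
exact: (FZ_conclusions phiF VW_F VW0 AmV BmW P_split U_int U_Bm ker_Bm_U Z_int Z_free U_Z
  rank_U_k c_gt0 X_int X_UZ LV_dense).
Qed.
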